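(* Let $G$ be a group generated by elements $x_1,\dots,x_n$ such that $[e]_g$ is a subgroup of $G$ for every $g\in G$. Then: (1) $\gamma_2(G)=[e]_{x_1}[e]_{x_2}\cdots[e]_{x_{n-1}}$ (a product of subgroups of $G$); (2) if $k\ge 1$ and $h_1,\dots,h_s\in G$ are such that $\gamma_k(G)=[e]_{h_1}[e]_{h_2}\cdots[e]_{h_s}$, and $p_{ij}=[x_i,h_j]$ for $i=1,\dots,n$, $j=1,\dots,s$, then $\gamma_{k+1}(G)=\prod_{i=1}^{n}\prod_{j=1}^{s}[e]_{p_{ij}}$.
   Context: $[x,y]=x^{-1}y^{-1}xy$. For $g\in G$, $[e]_g=\{[x,g]\mid x\in G\}$ (the twisted conjugacy class of the unit element for the inner automorphism $x\mapsto g^{-1}xg$). $\gamma_1(G)=G$, $\gamma_{k+1}(G)=[\gamma_k(G),G]$ is the lower central series. For subgroups $A_1,\dots,A_m$, $A_1\cdots A_m$ denotes the set of products $a_1\cdots a_m$ with $a_i\in A_i$. *)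

From Stdlib Require Import List Arith.
Import ListNotations.

Record group := Group {
  carrier :> Type;
  gmul : carrier -> carrier -> carrier;
  ginv : carrier -> carrier;
  gone : carrier;
  gmulA : forall a b c, gmul a (gmul b c) = gmul (gmul a b) c;
  gmul1l : forall a, gmul gone a = a;
  gmul1r : forall a, gmul a gone = a;
  gmulVl : forall a, gmul (ginv a) a = gone;
  gmulVr : forall a, gmul a (ginv a) = gone
}.

Arguments gmul {g}. Arguments ginv {g}. Arguments gone {g}.

Definition comm {G : group} (x y : G) : G :=
  gmul (gmul (ginv x) (ginv y)) (gmul x y).

(* [e]_g = { [x,g] | x in G } *)
Definition eclass {G : group} (g : G) : G -> Prop :=
  fun z => exists x : G, z = comm x g.

Definition is_subgroup {G : group} (S : G -> Prop) : Prop :=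
  S gone /\ (forall a b, S a -> S b -> S (gmul a b)) /\ (forall a, S a -> S (ginv a)).

Definition gen {G : group} (S : G -> Prop) : G -> Prop :=
  fun z => forall H : G -> Prop, is_subgroup H -> (forall a, S a -> H a) -> H z.

(* lcs k = gamma_{k+1}(G) *)
Fixpoint lcs {G : group} (k : nat) : G -> Prop :=
  match k with
  | 0 => fun _ => True
  | S k' => gen (fun z => exists a b : G, lcs k' a /\ z = comm a b)
  end.

(* gamma_k(G) for k >= 1 (gamma_1 = G, gamma_{k+1} = [gamma_k, G]);
   gamma 0 is set to G by convention and never used. *)
Definition gamma {G : group} (k : nat) : G -> Prop := lcs (pred k).

Fixpoint setprod {G : group} (l : list (G -> Prop)) : G -> Prop :=
  match l with
  | [] => fun z => z = gone
  | A :: l' => fun z => exists a b, A a /\ setprod l' b /\ z = gmul a b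
  end.

Definition set_eq {G : group} (A B : G -> Prop) : Prop := forall z, A z <-> B z.

(* Each [e]_g is a normal subgroup ([e]_g^y = [xy,g][y,g]^-1), so every product P of such
   subgroups is a normal subgroup. To show that a commutator subgroup lies in P it therefore
   suffices to check commutators of generators: for a normal subgroup N, both
   { z | [g,z] in N } and { g | [z,g] in N for all z } are subgroups, and [a,b] in N iff
   [b,a] in N. For
   gamma_{k+1}, every element of gamma_k = [e]_{h_1}...[e]_{h_s} commutes modulo
   P = prod [e]_{[x_i,h_j]} with all of G, since each [y,h_j] does so when y is a
   generator x_i. *)
From Stdlib Require Import List Arith Lia.
Import ListNotations.

Section GroupTheory.

Context {G : group}.
Implicit Types a b g h u x y z : G.

Lemma mulKg a b : gmul (ginv a) (gmul a b) = b.
Proof. rewrite gmulA, gmulVl, gmul1l; reflexivity. Qed.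

Lemma mulKVg a b : gmul a (gmul (ginv a) b) = b.
Proof. rewrite gmulA, gmulVr, gmul1l; reflexivity. Qed.

Lemma mulg_injl a b c : gmul a b = gmul a c -> b = c.
Proof. intro E. rewrite <- (mulKg a b), E, mulKg. reflexivity. Qed.

Lemma invg_unique a b : gmul a b = gone -> b = ginv a.
Proof. intro E. apply (mulg_injl a). rewrite E, gmulVr. reflexivity. Qed.

Lemma invgK a : ginv (ginv a) = a.
Proof. symmetry. apply invg_unique, gmulVl. Qed.

Lemma invMg a b : ginv (gmul a b) = gmul (ginv b) (ginv a).
Proof.
  symmetry. apply invg_unique.
  rewrite <- gmulA, (gmulA _ b), gmulVr, gmul1l, gmulVr. reflexivity.
Qed.

Lemma invg1 : ginv (@gone G) = gone.
Proof. symmetry. apply invg_unique, gmul1l. Qed.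

Definition conj u h : G := gmul (gmul (ginv h) u) h.

Ltac gsimpl :=
  unfold comm, conj;
  repeat rewrite ?invMg, ?invgK, ?invg1, ?gmul1l, ?gmul1r, <- ?gmulA,
                 ?mulKg, ?mulKVg, ?gmulVl, ?gmulVr.

Lemma conj1g y : conj gone y = gone.
Proof. gsimpl; reflexivity. Qed.

Lemma comm1g x : comm gone x = gone.
Proof. gsimpl; reflexivity. Qed.

Lemma commg1 x : comm x gone = gone.
Proof. gsimpl; reflexivity. Qed.

Lemma commgg x : comm x x = gone.
Proof. gsimpl; reflexivity. Qed.

Lemma invg_comm a b : ginv (comm a b) = comm b a.
Proof. gsimpl; reflexivity. Qed.

Lemma commgM x g h : comm x (gmul g h) = gmul (comm x h) (conj (comm x g) h).
Proof. gsimpl; reflexivity. Qed.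

Lemma commgV x g : comm x (ginv g) = conj (ginv (comm x g)) (ginv g).
Proof. gsimpl; reflexivity. Qed.

Lemma commgJ z g y : comm z (conj g y) = conj (comm (conj z (ginv y)) g) y.
Proof. gsimpl; reflexivity. Qed.

Lemma conj_comm x g y : conj (comm x g) y = gmul (comm (gmul x y) g) (ginv (comm y g)).
Proof. gsimpl; reflexivity. Qed.

Definition normal (N : G -> Prop) : Prop :=
  is_subgroup N /\ forall u y, N u -> N (conj u y).

Section Subgroup.

Variable N : G -> Prop.
Hypothesis sgN : is_subgroup N.

Lemma group1 : N gone.
Proof. apply sgN. Qed.

Lemma groupM a b : N a -> N b -> N (gmul a b).
Proof. apply sgN. Qed.

Lemma groupV a : N a -> N (ginv a).
Proof. apply sgN. Qed.

Lemma group_comm_sym a b : N (comm a b) -> N (comm b a).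
Proof. intro Hab. rewrite <- invg_comm. apply groupV, Hab. Qed.

End Subgroup.

Lemma gen_subgroup (S : G -> Prop) : is_subgroup (gen S).
Proof.
  split; [|split].
  - intros H HH _. apply (group1 H HH).
  - intros a b Ha Hb H HH HS. apply (groupM H HH); [apply Ha | apply Hb]; assumption.
  - intros a Ha H HH HS. apply (groupV H HH), Ha; assumption.
Qed.

Lemma mem_gen (S : G -> Prop) z : S z -> gen S z.
Proof. intros Sz H _ HS. auto. Qed.

Lemma gen_subset (S H : G -> Prop) :
  is_subgroup H -> (forall z, S z -> H z) -> forall z, gen S z -> H z.
Proof. intros HH HS z Hz. exact (Hz H HH HS). Qed.

Lemma generated_ind (S P : G -> Prop) :
  (forall z, gen S z) -> is_subgroup P -> (forall a, S a -> P a) -> forall z, P z.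
Proof. intros genS HP HS z. exact (gen_subset S P HP HS z (genS z)). Qed.

Lemma gamma_succE k :
  1 <= k -> gamma (k + 1) = gen (fun z => exists a b : G, gamma k a /\ z = comm a b).
Proof. destruct k as [|k]; [lia|]. unfold gamma. rewrite Nat.add_1_r. reflexivity. Qed.

(* The preimage of the centre of G/N. *)
Definition cent_mod (N : G -> Prop) : G -> Prop := fun g => forall z, N (comm z g).

Section NormalSubgroup.

Variable N : G -> Prop.
Hypothesis nN : normal N.

Let sgN : is_subgroup N := proj1 nN.

Lemma comm_right_subgroup g : is_subgroup (fun z => N (comm g z)).
Proof.
  split; [|split].
  - rewrite commg1. apply group1, sgN.
  - intros a b Ha Hb. rewrite commgM. apply groupM; auto. apply nN, Ha.
  - intros a Ha. rewrite commgV. apply nN, groupV; auto.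
Qed.

Lemma cent_mod_normal : normal (cent_mod N).
Proof.
  split; [split; [|split]|]; unfold cent_mod.
  - intro z. rewrite commg1. apply group1, sgN.
  - intros a b Ha Hb z. rewrite commgM. apply groupM; auto. apply nN, Ha.
  - intros a Ha z. rewrite commgV. apply nN, groupV; auto.
  - intros u y Hu z. rewrite commgJ. apply nN, Hu.
Qed.

End NormalSubgroup.

Section Generated.

Variable N : G -> Prop.
Hypothesis nN : normal N.
Variable S : G -> Prop.
Hypothesis genS : forall z, gen S z.

Lemma comm_in_normal_of_gens :
  (forall a b, S a -> S b -> N (comm a b)) -> forall a b, N (comm a b).
Proof.
  intros HS a b.
  enough (Hcent : forall g, cent_mod N g) by apply Hcent.
  apply (generated_ind S _ genS); [exact (proj1 (cent_mod_normal N nN))|].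
  intros g Sg z. apply (group_comm_sym N (proj1 nN)).
  revert z. apply (generated_ind S _ genS); [apply comm_right_subgroup, nN|].
  intros z Sz. apply HS; assumption.
Qed.

Lemma comm_in_cent_mod_of_gens h :
  (forall a, S a -> cent_mod N (comm a h)) -> forall y, cent_mod N (comm y h).
Proof.
  intros HS y.
  pose proof (cent_mod_normal N nN) as nC.
  apply (group_comm_sym _ (proj1 nC)). revert y.
  apply (generated_ind S _ genS); [apply comm_right_subgroup, nC|].
  intros a Sa. apply (group_comm_sym _ (proj1 nC)), HS, Sa.
Qed.

End Generated.

Lemma setprod_normal (l : list (G -> Prop)) :
  (forall A, In A l -> normal A) -> normal (setprod l).
Proof.
  induction l as [|A l IH]; simpl; intro Hl.
  - split; [split; [reflexivity|split]|].
    + intros a b -> ->. apply gmul1l.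
    + intros a ->. apply invg1.
    + intros u y ->. apply conj1g.
  - destruct (Hl A (or_introl eq_refl)) as [sgA nA].
    destruct (IH (fun B HB => Hl B (or_intror HB))) as [sgL nL].
    split; [split; [|split]|].
    + exists gone, gone. split; [apply group1, sgA|]. split; [apply group1, sgL|].
      rewrite gmul1l; reflexivity.
    + intros z z' (a & b & Ha & Hb & ->) (a' & b' & Ha' & Hb' & ->).
      exists (gmul a a'), (gmul (conj b a') b').
      split; [apply groupM; auto|]. split; [apply groupM; auto|].
      gsimpl; reflexivity.
    + intros z (a & b & Ha & Hb & ->).
      exists (ginv a), (conj (ginv b) (ginv a)).
      split; [apply groupV; auto|]. split; [apply nL, groupV; auto|].
      gsimpl; reflexivity.
    + intros z y (a & b & Ha & Hb & ->).
      exists (conj a y), (conj b y). split; [auto|]. split; [auto|].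
      gsimpl; reflexivity.
Qed.

Lemma setprod_subset (l : list (G -> Prop)) (H : G -> Prop) :
  is_subgroup H -> (forall A, In A l -> forall z, A z -> H z) ->
  forall z, setprod l z -> H z.
Proof.
  intro sgH. induction l as [|A l IH]; simpl; intros Hl z Hz.
  - subst z. apply group1, sgH.
  - destruct Hz as (a & b & Ha & Hb & ->). apply groupM; [exact sgH| |].
    + exact (Hl A (or_introl eq_refl) a Ha).
    + apply IH; [|exact Hb]. intros B HB. apply Hl. right. exact HB.
Qed.

Lemma setprod_one (l : list (G -> Prop)) :
  (forall A, In A l -> A gone) -> setprod l gone.
Proof.
  induction l as [|A l IH]; simpl; intro Hl; [reflexivity|].
  exists gone, gone. split; [apply Hl; left; reflexivity|].
  split; [apply IH; intros B HB; apply Hl; right; exact HB|].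
  rewrite gmul1l; reflexivity.
Qed.

Lemma mem_setprod (l : list (G -> Prop)) A z :
  (forall B, In B l -> B gone) -> In A l -> A z -> setprod l z.
Proof.
  induction l as [|B l IH]; simpl; intros Hl HA Hz; [contradiction|].
  assert (Hl' : forall C, In C l -> C gone) by (intros C HC; apply Hl; right; exact HC).
  destruct HA as [<- | HA].
  - exists z, gone. split; [exact Hz|]. split; [apply setprod_one, Hl'|].
    rewrite gmul1r; reflexivity.
  - exists gone, z. split; [apply Hl; left; reflexivity|]. split; [apply IH; assumption|].
    rewrite gmul1l; reflexivity.
Qed.

Lemma eclass1 g : eclass g gone.
Proof. exists gone. symmetry. apply comm1g. Qed.

Lemma eclass_normal g : is_subgroup (eclass g) -> normal (eclass g).
Proof.
  intro sgE. split; [exact sgE|]. intros u y [z ->].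
  rewrite conj_comm. apply (groupM _ sgE).
  - exists (gmul z y). reflexivity.
  - apply (groupV _ sgE). exists y. reflexivity.
Qed.

End GroupTheory.

Section LowerCentralSeries.

Variable G : group.
Variable n : nat.
Variable x : nat -> G.
Hypothesis hgen : forall z : G, gen (fun y => exists i, i < n /\ y = x i) z.
Hypothesis hsub : forall g : G, is_subgroup (eclass g).

Lemma setprod_eclass_normal (l : list (G -> Prop)) :
  (forall A, In A l -> exists g, A = eclass g) -> normal (setprod l).
Proof.
  intro Hl. apply setprod_normal. intros A HA.
  destruct (Hl A HA) as [g ->]. apply eclass_normal, hsub.
Qed.

Lemma mem_setprod_eclass (l : list (G -> Prop)) g z :
  (forall A, In A l -> exists g, A = eclass g) -> In (eclass g) l -> setprod l (comm z g).
Proof.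
  intros Hl Hg. apply (mem_setprod l (eclass g)); [|exact Hg|exists z; reflexivity].
  intros B HB. destruct (Hl B HB) as [g' ->]. apply eclass1.
Qed.

Lemma gamma2_eq :
  set_eq (gamma 2) (setprod (map (fun i => eclass (x i)) (seq 0 (n - 1)))).
Proof.
  set (l := map (fun i => eclass (x i)) (seq 0 (n - 1))).
  assert (Hl : forall A, In A l -> exists i, i < n - 1 /\ A = eclass (x i)).
  { intros A HA. apply in_map_iff in HA. destruct HA as (i & <- & Hi).
    apply in_seq in Hi. exists i. split; [lia | reflexivity]. }
  assert (Hl_eclass : forall A, In A l -> exists g, A = eclass g).
  { intros A HA. destruct (Hl A HA) as (i & _ & ->). exists (x i). reflexivity. }
  set (M := setprod l).
  assert (nM : normal M) by exact (setprod_eclass_normal l Hl_eclass).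
  assert (Mx : forall i z, i < n - 1 -> M (comm z (x i))).
  { intros i z Hi. apply mem_setprod_eclass; [exact Hl_eclass|].
    apply in_map_iff. exists i. split; [reflexivity | apply in_seq; lia]. }
  change (gamma 2) with (@gamma G (1 + 1)). rewrite gamma_succE by lia.
  intro z. split.
  - apply (gen_subset _ _ (proj1 nM)). intros c (a & b & _ & ->).
    apply (comm_in_normal_of_gens M nM _ hgen).
    intros ? ? (i & Hi & ->) (j & Hj & ->).
    destruct (Nat.lt_ge_cases j (n - 1)) as [Hj' | Hj']; [apply Mx, Hj'|].
    destruct (Nat.lt_ge_cases i (n - 1)) as [Hi' | Hi'].
    + apply (group_comm_sym _ (proj1 nM)), Mx, Hi'.
    + replace j with i by lia. rewrite commgg. apply (group1 _ (proj1 nM)).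
  - apply setprod_subset; [apply gen_subgroup|].
    intros A HA. destruct (Hl A HA) as (i & _ & ->). intros c [y ->].
    apply mem_gen. exists y, (x i). split; [exact I | reflexivity].
Qed.

Lemma gamma_succ_eq (k s : nat) (h : nat -> G) :
  1 <= k ->
  set_eq (gamma k) (setprod (map (fun j => eclass (h j)) (seq 0 s))) ->
  set_eq (gamma (k + 1))
    (setprod (flat_map (fun i => map (fun j => eclass (comm (x i) (h j))) (seq 0 s))
                       (seq 0 n))).
Proof.
  intros Hk Hgk.
  set (lh := map (fun j => eclass (h j)) (seq 0 s)).
  set (l := flat_map (fun i => map (fun j => eclass (comm (x i) (h j))) (seq 0 s)) (seq 0 n)).
  assert (Hlh : forall A, In A lh -> exists j, j < s /\ A = eclass (h j)).
  { intros A HA. apply in_map_iff in HA. destruct HA as (j & <- & Hj).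
    apply in_seq in Hj. exists j. split; [lia | reflexivity]. }
  assert (Hl : forall A, In A l ->
                 exists i j, i < n /\ j < s /\ A = eclass (comm (x i) (h j))).
  { intros A HA. apply in_flat_map in HA. destruct HA as (i & Hi & HA).
    apply in_map_iff in HA. destruct HA as (j & <- & Hj).
    apply in_seq in Hi, Hj. exists i, j. repeat split; lia. }
  assert (Hl_eclass : forall A, In A l -> exists g, A = eclass g).
  { intros A HA. destruct (Hl A HA) as (i & j & _ & _ & ->). eexists. reflexivity. }
  set (P := setprod l).
  assert (nP : normal P) by exact (setprod_eclass_normal l Hl_eclass).
  assert (Px : forall i j z, i < n -> j < s -> P (comm z (comm (x i) (h j)))).
  { intros i j z Hi Hj. apply mem_setprod_eclass; [exact Hl_eclass|].
    apply in_flat_map. exists i. split; [apply in_seq; lia|].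
    apply in_map_iff. exists j. split; [reflexivity | apply in_seq; lia]. }
  rewrite gamma_succE by exact Hk.
  intro z. split.
  - apply (gen_subset _ _ (proj1 nP)). intros c (a & b & Ha & ->).
    assert (Ca : cent_mod P a).
    { apply Hgk in Ha. revert a Ha.
      apply setprod_subset; [exact (proj1 (cent_mod_normal P nP))|].
      intros A HA. destruct (Hlh A HA) as (j & Hj & ->). intros c [y ->].
      apply (comm_in_cent_mod_of_gens P nP _ hgen).
      intros ? (i & Hi & ->) w. apply Px; assumption. }
    apply (group_comm_sym _ (proj1 nP)), Ca.
  - apply setprod_subset; [apply gen_subgroup|].
    intros A HA. destruct (Hl A HA) as (i & j & Hi & Hj & ->). intros c [y ->].
    apply (group_comm_sym _ (gen_subgroup _)), mem_gen.
    exists (comm (x i) (h j)), y. split; [|reflexivity].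
    apply Hgk. unfold lh. apply mem_setprod_eclass.
    + intros B HB. destruct (Hlh B HB) as (j' & _ & ->). eexists. reflexivity.
    + apply in_map_iff. exists j. split; [reflexivity | apply in_seq; lia].
Qed.

End LowerCentralSeries.

Theorem theorem1 (G : group) (n : nat) (x : nat -> G)
  (hgen : forall z : G, gen (fun y => exists i, i < n /\ y = x i) z)
  (hsub : forall g : G, is_subgroup (eclass g)) :
  set_eq (gamma 2) (setprod (map (fun i => eclass (x i)) (seq 0 (n - 1))))
  /\
  (forall (k s : nat) (h : nat -> G),
     1 <= k ->
     set_eq (gamma k) (setprod (map (fun j => eclass (h j)) (seq 0 s))) ->
     set_eq (gamma (k + 1))
       (setprod (flat_map (fun i => map (fun j => eclass (comm (x i) (h j))) (seq 0 s))
                          (seq 0 n)))).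
Proof.
  split.
  - exact (gamma2_eq G n x hgen hsub).
  - exact (gamma_succ_eq G n x hgen hsub).
Qed.
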